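(* Let $\mathbb{F}\in\{\mathbb{R},\mathbb{C}\}$, let $\nu$ be a vector norm on $\mathbb{F}^n$, and let $A\in\mathbb{F}^{n\times n}$ be paracontracting with respect to $\nu$. Let $K=\{x\in\mathbb{F}^n: Ax=x\}$ be the subspace of fixed points of $A$ and let $H=\mathcal{R}(I-A)$ be the range of $I-A$. Then $H$ is invariant under $A$, $H$ is complementary to $K$ (i.e. $\mathbb{F}^n=H\oplus K$), and $\nu^0_H(A)<1$; consequently $A$ is an $H$-contractor with respect to $\nu$.
   Context: $A$ is paracontracting with respect to $\nu$ if $\nu(Ax)<\nu(x)$ whenever $Ax\neq x$. For a subspace $H$ invariant under $A$, the partial norm is $\nu^0_H(A)=\sup_{0\neq x\in H}\nu(Ax)/\nu(x)$. The operator norm is $\nu^0(A)=\sup_{x\neq 0}\nu(Ax)/\nu(x)$. $A$ is nonexpansive with respect to $\nu$ if $\nu^0(A)\le 1$. $A$ is an $H$-contractor (with respect to $\nu$) if $A$ is nonexpansive, $H$ is invariant under $A$, and $\nu^0_H(A)<1$. *)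

From HB Require Import structures.
From mathcomp Require Import all_boot all_order all_algebra.
From mathcomp Require Import classical_sets reals.
From mathcomp Require Export complex.
Set Implicit Arguments. Unset Strict Implicit. Unset Printing Implicit Defensive.
Import Order.TTheory GRing.Theory Num.Theory.
Local Open Scope ring_scope.
Local Open Scope classical_set_scope.

Section NormDefs.
Variables (R : realType) (F : numFieldType) (absF : F -> R) (n : nat).

Definition is_vnorm (nu : 'cV[F]_n -> R) : Prop :=
  [/\ forall x, 0 <= nu x,
      forall x, nu x = 0 -> x = 0,
      forall (a : F) x, nu (a *: x) = absF a * nu x
    & forall x y, nu (x + y) <= nu x + nu y].

Definition paracontracting (nu : 'cV[F]_n -> R) (A : 'M[F]_n) : Prop :=
  forall x, A *m x != x -> nu (A *m x) < nu x.

Definition fixed_space (A : 'M[F]_n) : set 'cV[F]_n := [set x | A *m x = x].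

Definition mx_range (M : 'M[F]_n) : set 'cV[F]_n :=
  [set M *m y | y in [set: 'cV[F]_n]].

Definition mx_invariant (A : 'M[F]_n) (H : set 'cV[F]_n) : Prop :=
  forall x, H x -> H (A *m x).

Definition complementary (H K : set 'cV[F]_n) : Prop :=
  (forall x, exists h k, [/\ H h, K k & x = h + k]) /\
  (forall x, H x -> K x -> x = 0).

(* Partial norm nu^0_H(A) = sup_{0 <> x in H} nu(Ax)/nu(x)
   (MathComp-Analysis sup; the sup of the empty set is 0). *)
Definition partial_norm (nu : 'cV[F]_n -> R) (A : 'M[F]_n) (H : set 'cV[F]_n) : R :=
  sup [set nu (A *m x) / nu x | x in [set x | H x /\ x != 0]].

Definition op_norm (nu : 'cV[F]_n -> R) (A : 'M[F]_n) : R :=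
  sup [set nu (A *m x) / nu x | x in [set x | x != 0]].

Definition nonexpansive (nu : 'cV[F]_n -> R) (A : 'M[F]_n) : Prop :=
  op_norm nu A <= 1.

Definition contractor (nu : 'cV[F]_n -> R) (A : 'M[F]_n) (H : set 'cV[F]_n) : Prop :=
  [/\ nonexpansive nu A, mx_invariant A H & partial_norm nu A H < 1].

End NormDefs.

From HB Require Import structures.
From mathcomp Require Import all_boot all_order all_algebra.
From mathcomp Require Import classical_sets reals complex.
From mathcomp Require Import boolp topology normedtype derive.
From mathcomp Require Import lra.
Import Order.TTheory GRing.Theory Num.Theory.
Import numFieldNormedType.Exports.
Set Implicit Arguments. Unset Strict Implicit. Unset Printing Implicit Defensive.
Local Open Scope ring_scope.
Local Open Scope classical_set_scope.

(* Paracontraction makes A nonexpansive, and a fixed point x = y - A y of A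
   forces A^k y = y - k x, which stays bounded only if x = 0; so the range H
   of I - A meets the fixed space K trivially, and rank-nullity gives
   F^n = H (+) K.  As H contains no nonzero fixed point, nu(Ax) < nu(x) on
   H \ {0}.  Both sides are seminorms in coordinates of H,
   and compactness of the unit sphere turns this strict inequality into a
   uniform bound nu(Ax) <= c nu(x) with c < 1.  The complex case reduces to
   the real one by viewing C^r as R^(2r). *)

Definition seminorm (R : numDomainType) (F : pzRingType) (V : lmodType F)
    (absF : F -> R) (p : V -> R) : Prop :=
  (forall x y, p (x + y) <= p x + p y) /\ (forall a x, p (a *: x) = absF a * p x).

Definition strict_domination_uniform (R : numDomainType) (F : numFieldType)
    (absF : F -> R) : Prop :=
  forall r (p q : 'cV[F]_r -> R), seminorm absF p -> seminorm absF q ->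
    (forall x, x != 0 -> 0 < q x) -> (forall x, x != 0 -> p x < q x) ->
  exists2 c, c < 1 & forall x, p x <= c * q x.

Section RealSeminorm.
Variables (R : realType) (m : nat) (p : 'rV[R]_m -> R).
Hypotheses (pD : forall x y, p (x + y) <= p x + p y)
           (pZ : forall (a : R) x, p (a *: x) = `|a| * p x).

Lemma seminorm0 : p 0 = 0.
Proof. by have := pZ 0 0; rewrite scale0r normr0 mul0r. Qed.

Lemma seminormN x : p (- x) = p x.
Proof. by rewrite -scaleN1r pZ normrN1 mul1r. Qed.

Lemma seminorm_ge0 x : 0 <= p x.
Proof.
have := pD x (- x); rewrite subrr seminorm0 seminormN => h.
by rewrite -(pmulrn_lge0 _ (isT : (0 < 2)%N)) mulr2n.
Qed.

Lemma seminorm_le_norm x : p x <= (\sum_j p 'e_j) * `|x|.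
Proof.
rewrite {1}(row_sum_delta x) mulr_suml.
apply: (big_ind2 (fun a b => p a <= b)) => [|a1 a2 b1 b2 h1 h2|j _].
- by rewrite seminorm0.
- exact: le_trans (pD _ _) (lerD h1 h2).
- rewrite pZ mulrC ler_wpM2l ?seminorm_ge0 //.
  by rewrite [leRHS]/Num.Def.normr /= mx_normrE; apply/bigmax_geP; right; exists (0, j).
Qed.

Lemma seminorm_continuous : continuous p.
Proof.
set C := \sum_j p 'e_j + 1.
have C0 : 0 < C by rewrite ltr_wpDl ?sumr_ge0 // => j _; apply: seminorm_ge0.
have lip x y : `|p x - p y| <= C * `|x - y|.
  have h1 : p x <= p y + p (x - y) by rewrite -{1}(subrK y x) addrC pD.
  have h2 : p y <= p x + p (x - y).
    by have := pD x (y - x); rewrite addrC subrK -opprB seminormN.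
  apply: (@le_trans _ _ (p (x - y))); first by rewrite ler_norml; apply/andP; split; lra.
  by apply: (le_trans (seminorm_le_norm _)); rewrite ler_wpM2r // lerDl.
move=> x; apply/(@cvgrPdist_le _ _ _ _ (nbhs_filter x)) => e e0; near=> t.
apply: le_trans (lip _ _) _; rewrite -ler_pdivlMl // mulrC.
near: t; apply: (@cvgr_dist_le _ _ _ _ _ id); [exact: cvg_id | exact: divr_gt0].
Unshelve. all: by end_near.
Qed.

End RealSeminorm.

Lemma sphere_compact (R : realType) m : compact [set x : 'rV[R]_m | `|x| = 1].
Proof.
apply: bounded_closed_compact.
  by exists 1; split; [exact: num_real | move=> M M1 x /= ->; exact: ltW].
apply: (@preimage_closed _ _ (fun x : 'rV[R]_m => `|x|) [set y | y = 1]).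
  by move=> ? _; exact: norm_continuous.
exact: closed_eq.
Qed.

(* The ratio p/q is continuous on the compact unit sphere, so it attains its
   maximum c there, and c < 1; homogeneity extends the bound to all vectors. *)
Lemma seminorm_strict_domination_uniform (R : realType) m (p q : 'rV[R]_m -> R) :
    seminorm Num.norm p -> seminorm Num.norm q ->
    (forall x, x != 0 -> 0 < q x) -> (forall x, x != 0 -> p x < q x) ->
  exists2 c, c < 1 & forall x, p x <= c * q x.
Proof.
move=> [pD pZ] [qD qZ] qpos pq.
have [[x0 x00]|none] := pselect (exists x : 'rV[R]_m, x != 0); last first.
  exists 0 => // x; have [->|x0] := eqVneq x 0; first by rewrite !seminorm0 ?mulr0.
  by case: none; exists x.
pose S := [set x : 'rV[R]_m | `|x| = 1].
have normalize (x : 'rV[R]_m) : x != 0 -> S (`|x|^-1 *: x).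
  by move=> xn0; rewrite /S /= normrZ normrV ?unitfE ?normr_eq0 // normr_id mulVf ?normr_eq0.
have Sn0 x : S x -> x != 0 by rewrite /S /= -normr_eq0 => ->; exact: oner_neq0.
pose f x := p x / q x.
have fc : {within S, continuous f}.
  apply: continuous_in_subspaceT => x; rewrite inE => Sx.
  apply: (@continuousM _ _ p (fun y => (q y)^-1)); first exact: seminorm_continuous.
  by apply: (@continuousV _ _ q); [rewrite gt_eqF ?qpos ?Sn0 | exact: seminorm_continuous].
have [|c0 + c0max] := EVT_max_rV _ (@sphere_compact R m) fc.
  by exists (`|x0|^-1 *: x0); apply: normalize.
rewrite inE => Sc0; exists (f c0); first by rewrite ltr_pdivrMr ?mul1r ?qpos ?pq ?Sn0.
move=> x; have [->|xn0] := eqVneq x 0; first by rewrite !seminorm0 ?mulr0.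
have ax : 0 < `|x|^-1 by rewrite invr_gt0 normr_gt0.
have := c0max _ (mem_set (normalize _ xn0)).
rewrite /f pZ qZ gtr0_norm // invfM mulrACA mulfV ?gt_eqF // mul1r.
by rewrite ler_pdivrMr ?qpos.
Qed.

Lemma strict_domination_uniform_pullback (R : realType) m (V : Type)
    (e : 'rV[R]_m -> V) (e' : V -> 'rV[R]_m) (p q : V -> R) :
    cancel e' e -> seminorm Num.norm (p \o e) -> seminorm Num.norm (q \o e) ->
    (forall w, w != 0 -> 0 < q (e w)) -> (forall w, w != 0 -> p (e w) < q (e w)) ->
  exists2 c, c < 1 & forall x, p x <= c * q x.
Proof.
move=> e'K pN qN qpos pq.
have [c c1 le_pq] := seminorm_strict_domination_uniform pN qN qpos pq.
by exists c => // x; rewrite -(e'K x); apply: le_pq.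
Qed.

Lemma strict_domination_uniform_real (R : realType) :
  strict_domination_uniform (fun a : R => `|a|).
Proof.
move=> r p q [pD pZ] [qD qZ] qpos pq.
apply: (@strict_domination_uniform_pullback _ _ _ (@trmx R 1 r) (@trmx R r 1)).
- exact: trmxK.
- by split=> [x y | a x] /=; rewrite ?linearD ?linearZ /=.
- by split=> [x y | a x] /=; rewrite ?linearD ?linearZ /=.
- by move=> w; rewrite -trmx_eq0; apply: qpos.
- by move=> w; rewrite -trmx_eq0; apply: pq.
Qed.

Section ComplexCoordinates.
Variables (R : realType) (r : nat).

Definition cV_of_re_im (w : 'rV[R]_(r + r)) : 'cV[R[i]]_r :=
  \col_k (lsubmx w 0 k +i* rsubmx w 0 k)%C.

Definition re_im_of_cV (z : 'cV[R[i]]_r) : 'rV[R]_(r + r) :=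
  row_mx (\row_k complex.Re (z k 0)) (\row_k complex.Im (z k 0)).

Lemma cV_of_re_imK : cancel cV_of_re_im re_im_of_cV.
Proof.
move=> w; rewrite -[RHS]hsubmxK /re_im_of_cV.
by congr row_mx; apply/rowP => k; rewrite !mxE.
Qed.

Lemma re_im_of_cVK : cancel re_im_of_cV cV_of_re_im.
Proof.
move=> z; apply/matrixP => k j; rewrite (ord1 j) mxE row_mxKl row_mxKr !mxE.
by case: (z k 0).
Qed.

Lemma cV_of_re_imD : {morph cV_of_re_im : w1 w2 / w1 + w2}.
Proof. by move=> w1 w2; apply/matrixP => k j; rewrite !mxE. Qed.

Lemma cV_of_re_imZ (a : R) w : cV_of_re_im (a *: w) = a%:C%C *: cV_of_re_im w.
Proof.
apply/matrixP => k j; rewrite !mxE /=.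
by apply/eqP; rewrite eq_complex /= !mul0r subr0 addr0 !eqxx.
Qed.

Lemma cV_of_re_im_eq0 w : (cV_of_re_im w == 0) = (w == 0).
Proof.
apply/eqP/eqP => [w0 | ->]; last by apply/matrixP => k j; rewrite !mxE.
rewrite -[w]cV_of_re_imK w0 /re_im_of_cV -row_mx0.
by congr row_mx; apply/rowP => k; rewrite !mxE.
Qed.

End ComplexCoordinates.

Lemma Re_normc_real (R : realType) (a : R) : complex.Re `|a%:C%C| = `|a|.
Proof. by rewrite normc_def /= expr0n /= addr0 sqrtr_sqr. Qed.

Lemma Re_natr (R : realType) k : complex.Re (k%:R : R[i]) = k%:R.
Proof. by rewrite -(rmorph_nat (real_complex R)). Qed.

Lemma strict_domination_uniform_complex (R : realType) :
  strict_domination_uniform (fun a : R[i] => complex.Re `|a|).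
Proof.
move=> r p q [pD pZ] [qD qZ] qpos pq.
apply: (@strict_domination_uniform_pullback _ _ _ (@cV_of_re_im R r) (@re_im_of_cV R r)).
- exact: re_im_of_cVK.
- by split=> [x y | a x] /=; rewrite ?cV_of_re_imD ?cV_of_re_imZ ?pZ ?Re_normc_real.
- by split=> [x y | a x] /=; rewrite ?cV_of_re_imD ?cV_of_re_imZ ?qZ ?Re_normc_real.
- by move=> w; rewrite -cV_of_re_im_eq0; apply: qpos.
- by move=> w; rewrite -cV_of_re_im_eq0; apply: pq.
Qed.

Section RangeAndFixedSpace.
Variables (F : numFieldType) (n : nat).
Implicit Types (A M : 'M[F]_n) (x : 'cV[F]_n).

Lemma mx_range_trmx M x : mx_range M x <-> (x^T <= M^T)%MS.
Proof.
split=> [[y _ <-] | /submxP [D xE]]; first by rewrite trmx_mul submxMl.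
by exists D^T => //; rewrite -[x]trmxK xE trmx_mul trmxK.
Qed.

Lemma fixed_space_kermx A x : fixed_space A x <-> (x^T <= kermx (1%:M - A)^T)%MS.
Proof.
rewrite /fixed_space /=; split=> [Ax | /sub_kermxP].
  by apply/sub_kermxP; rewrite -trmx_mul mulmxBl mul1mx Ax subrr trmx0.
by rewrite -trmx_mul => /eqP; rewrite trmx_eq0 mulmxBl mul1mx subr_eq0 => /eqP.
Qed.

Lemma mx_invariant_range A M : comm_mx A M -> mx_invariant A (mx_range M).
Proof. by move=> AM _ [y _ <-]; exists (A *m y) => //; rewrite mulmxA -AM mulmxA. Qed.

Lemma complementary_range_fixed A :
    (forall x, mx_range (1%:M - A) x -> fixed_space A x -> x = 0) ->
  complementary (mx_range (1%:M - A)) (fixed_space A).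
Proof.
set B := (1%:M - A)^T => HK0; split=> // x.
have cap0 : (B :&: kermx B)%MS = 0.
  apply/eqP; rewrite -submx0; apply/rV_subP => v; rewrite sub_capmx => /andP[vB vK].
  rewrite submx0 -trmx_eq0; apply/eqP/HK0.
    by apply/mx_range_trmx; rewrite trmxK.
  by apply/fixed_space_kermx; rewrite trmxK.
have full : row_full (B + kermx B)%MS.
  by rewrite /row_full mxrank_disjoint_sum // mxrank_ker subnKC // rank_leq_row.
case/sub_addsmxP: (submx_full x^T full) => [[u1 u2]] /= xE.
exists (u1 *m B)^T, (u2 *m kermx B)^T; split.
- by apply/mx_range_trmx; rewrite trmxK submxMl.
- by apply/fixed_space_kermx; rewrite trmxK submxMl.
- by rewrite -linearD /= -xE trmxK.
Qed.

Lemma mx_range_row_base M x :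
  mx_range M x <-> exists z, x = (row_base M^T)^T *m z.
Proof.
rewrite mx_range_trmx -(eq_row_base M^T); split=> [/submxP [D xE] | [z ->]].
  by exists D^T; rewrite -[x]trmxK xE trmx_mul.
by rewrite trmx_mul trmxK submxMl.
Qed.

Lemma row_base_trmx_mul_eq0 m (B : 'M[F]_(m, n)) (z : 'cV_(\rank B)) :
  ((row_base B)^T *m z == 0) = (z == 0).
Proof.
by rewrite -trmx_eq0 trmx_mul trmxK mulmx_free_eq0 ?row_base_free // trmx_eq0.
Qed.

End RangeAndFixedSpace.

Lemma sup_ratio_le (R : realType) (T : Type) (S : set T) (f g : T -> R) c :
    0 <= c -> (forall x, S x -> 0 < g x) -> (forall x, S x -> f x <= c * g x) ->
  sup [set f x / g x | x in S] <= c.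
Proof.
move=> c0 gpos le_fg; have [->|/set0P ne] := eqVneq [set f x / g x | x in S] set0.
  by rewrite sup0.
by apply: ge_sup => // _ [x Sx <-]; rewrite ler_pdivrMr ?gpos ?le_fg.
Qed.

Section Paracontracting.
Variables (R : realType) (F : numFieldType) (absF : F -> R).
Variables (n : nat) (nu : 'cV[F]_n -> R) (A : 'M[F]_n).
Hypotheses (nu_vnorm : is_vnorm absF nu) (A_para : paracontracting nu A).

Local Notation H := (mx_range (1%:M - A)).

Lemma vnorm_ge0 x : 0 <= nu x. Proof. by case: nu_vnorm. Qed.
Lemma vnormZ a x : nu (a *: x) = absF a * nu x. Proof. by case: nu_vnorm. Qed.
Lemma vnormD x y : nu (x + y) <= nu x + nu y. Proof. by case: nu_vnorm. Qed.

Lemma vnorm_gt0 x : x != 0 -> 0 < nu x.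
Proof.
case: nu_vnorm => _ nu_eq0 _ _ xn0; rewrite lt_def vnorm_ge0 andbT.
by apply: contra xn0 => /eqP/nu_eq0 ->.
Qed.

Lemma paracontracting_le x : nu (A *m x) <= nu x.
Proof. by have [->|/A_para/ltW] := eqVneq (A *m x) x. Qed.

Lemma paracontracting_op_norm_le1 : nonexpansive nu A.
Proof.
apply: sup_ratio_le => [||x _]; rewrite ?ler01 ?mul1r ?paracontracting_le //.
exact: vnorm_gt0.
Qed.

Lemma fixed_shift_bounded x y : A *m x = x -> A *m y = y - x ->
  forall k, nu (y - x *+ k) <= nu y.
Proof.
move=> Ax Ay; elim=> [|k IHk]; first by rewrite mulr0n subr0.
have -> : y - x *+ k.+1 = A *m (y - x *+ k).
  rewrite mulmxBr -[x *+ k]scaler_nat -scalemxAr Ax scaler_nat Ay mulrSr.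
  by rewrite opprD addrA addrAC.
exact: le_trans (paracontracting_le _) IHk.
Qed.

Hypotheses (absFN1 : absF (-1) = 1) (absF_natr : forall k, absF k%:R = k%:R).

Lemma paracontracting_range_fixed_eq0 x : H x -> fixed_space A x -> x = 0.
Proof.
move=> [y _ xE] Ax.
have Ay : A *m y = y - x by rewrite -xE mulmxBl mul1mx opprB addrC subrK.
have bound k : k%:R * nu x <= 2 * nu y.
  rewrite -absF_natr -vnormZ scaler_nat -[x *+ k](subKr y) -scaleN1r.
  apply: le_trans (vnormD _ _) _; rewrite vnormZ absFN1 mul1r.
  by have := fixed_shift_bounded Ax Ay k; lra.
case: nu_vnorm => _ nu_eq0 _ _; apply: nu_eq0; apply/eqP; rewrite eq_le vnorm_ge0 andbT.
rewrite leNgt; apply/negP => nux_gt0.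
have := @archi_boundP R (2 * nu y / nu x).
rewrite divr_ge0 ?mulr_ge0 ?vnorm_ge0 // => /(_ isT); rewrite ltr_pdivrMr // => lt_k.
by have := bound (Num.Def.archi_bound (2 * nu y / nu x)); lra.
Qed.

Hypothesis domination : strict_domination_uniform absF.

Lemma paracontracting_partial_norm_lt1 : partial_norm nu A H < 1.
Proof.
pose M := (row_base (1%:M - A)^T)^T.
have Mz_eq0 (z : 'cV_(\rank (1%:M - A)^T)) : (M *m z == 0) = (z == 0).
  exact: row_base_trmx_mul_eq0.
have [||||c c_lt1 le_pq] := @domination _ (fun z => nu (A *m (M *m z))) (fun z => nu (M *m z)).
- by split=> [z1 z2 | a z]; rewrite ?mulmxDr ?vnormD // -!scalemxAr vnormZ.
- by split=> [z1 z2 | a z]; rewrite ?mulmxDr ?vnormD // -scalemxAr vnormZ.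
- by move=> z; rewrite -Mz_eq0; apply: vnorm_gt0.
- move=> z; rewrite -Mz_eq0 => Mz_neq0; apply: A_para; apply: contra Mz_neq0 => /eqP AMz.
  by apply/eqP/paracontracting_range_fixed_eq0 => //; apply/mx_range_row_base; exists z.
apply: (@le_lt_trans _ _ (Num.max c 0)); last by rewrite gt_max c_lt1 ltr01.
apply: sup_ratio_le => [|x [_]|x [/mx_range_row_base [z ->] _]].
- by rewrite le_max lexx orbT.
- exact: vnorm_gt0.
- by apply: le_trans (le_pq z) _; rewrite ler_wpM2r ?vnorm_ge0 ?le_max ?lexx.
Qed.

Lemma paracontracting_contractor :
  [/\ mx_invariant A H, complementary H (fixed_space A),
      partial_norm nu A H < 1 & contractor nu A H].
Proof.
have inv : mx_invariant A H by apply/mx_invariant_range/comm_mxB/comm_mx_refl/comm_mx1.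
have lt1 := paracontracting_partial_norm_lt1.
split=> //; first exact/complementary_range_fixed/paracontracting_range_fixed_eq0.
by split=> //; apply: paracontracting_op_norm_le1.
Qed.

End Paracontracting.

(* On R[i] the norm is complex-valued; its real part is the modulus. *)
Theorem lemma2p5 (R : realType) :
  (forall (n : nat) (nu : 'cV[R]_n -> R) (A : 'M[R]_n),
     is_vnorm (fun a : R => `|a|) nu ->
     paracontracting nu A ->
     [/\ mx_invariant A (mx_range (1%:M - A)),
         complementary (mx_range (1%:M - A)) (fixed_space A),
         partial_norm nu A (mx_range (1%:M - A)) < 1
       & contractor nu A (mx_range (1%:M - A))]) /\
  (forall (n : nat) (nu : 'cV[R[i]]_n -> R) (A : 'M[R[i]]_n),
     is_vnorm (fun a : R[i] => complex.Re `|a|) nu ->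
     paracontracting nu A ->
     [/\ mx_invariant A (mx_range (1%:M - A)),
         complementary (mx_range (1%:M - A)) (fixed_space A),
         partial_norm nu A (mx_range (1%:M - A)) < 1
       & contractor nu A (mx_range (1%:M - A))]).
Proof.
split=> n nu A nu_vnorm A_para.
- apply: (@paracontracting_contractor _ _ (fun a : R => `|a|)) => //.
  + exact: normrN1.
  + exact: normr_nat.
  + exact: strict_domination_uniform_real.
- apply: (@paracontracting_contractor _ _ (fun a : R[i] => complex.Re `|a|)) => //.
  + by rewrite normrN1.
  + by move=> k; rewrite normr_nat Re_natr.
  + exact: strict_domination_uniform_complex.
Qed.
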